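(* Fix $\epsilon \in (0,0.1)$. Let $G_0\subset\mathbb{R}^2$ be the unit grid (union of the lines $x_1=k$, $x_2=k$, $k\in\mathbb{Z}$), $B(\epsilon)$ the Euclidean $\epsilon$-neighbourhood of $\mathbb{Z}^2$, and $G_\epsilon = (G_0 \setminus B(\epsilon)) \cup \partial B(\epsilon)$. Put $P_1=(0,-\epsilon)$, $P_2=(0,1-\epsilon)$, $P_3=(1,-\epsilon)$, $E_1=(-\epsilon,0)$, $E_2=(1-\epsilon,0)$, $L=(\epsilon,0)$, $M=(0,\epsilon)$. Consider the following paths in $G_\epsilon$: $a$ goes from $P_1$ along the circle $|x|=\epsilon$ through $E_1$ to $M$ (clockwise), then along the vertical grid segment to $P_2$; $b$ goes from $P_1$ along the circle $|x|=\epsilon$ to $L$ (counterclockwise quarter arc), then along the horizontal grid segment to $E_2$, then along the circle $|x-(1,0)|=\epsilon$ (clockwise quarter arc) to $P_3$; $c$ is the loop from $P_1$ once counterclockwise around the circle $|x|=\epsilon$ through $L, M, E_1$ back to $P_1$. Their projections to $G_\epsilon/\mathbb{Z}^2$ are loops generating $\pi_1(G_\epsilon/\mathbb{Z}^2, P_1)$, identified with the free group $\mathbb{F}_3=\langle a,b,c\rangle$. Let $r = aba^{-1}b^{-1}c$ and let $N$ be its normal closure in $\mathbb{F}_3$. For $w \in N$, let $\gamma'(w)$ be the closed curve in $G_\epsilon$ starting at $P_1$ obtained by lifting the loop $w$, and let $\gamma(w)$ be a geometrically irreducible cycle in $G_\epsilon$ freely homotopic in $G_\epsilon$ to $\gamma'(w)$.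 Then for every cyclically reduced word $w \in N$, $$l(w) \leq (1-2\epsilon)^{-1}\,\mathrm{Length}(\gamma(w)),$$ where $l(w)$ is the number of occurrences of the letters $a^{\pm1}, b^{\pm1}$ in $w$ and $\mathrm{Length}$ is Euclidean length.
   Context: A 1-cycle on $G_\epsilon$ is geometrically irreducible if it has no pair of consecutive edges which coincide but have opposite orientations. Elements of $N$ lie in the kernel of the homomorphism $\mathbb{F}_3\to\mathbb{Z}^2$ sending $a\mapsto(0,1)$, $b\mapsto(1,0)$, $c\mapsto 0$, so their lifts to $G_\epsilon$ are closed. *)

From Stdlib Require Import Reals ZArith List Relations.
Import ListNotations.
Open Scope R_scope.

(* G_eps = (G_0 \ B(eps)) u dB(eps) is a graph embedded in R^2.
   Vertices: the points z + eps*d, z in Z^2, d in {E,N,W,S} (unit vectors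
   (1,0),(0,1),(-1,0),(0,-1)), i.e. where the grid lines meet the circles
   |x - z| = eps.
   Edges:
   - Arc z d   : the counterclockwise quarter arc of |x - z| = eps from
                 z + eps*d to z + eps*(ccw d); Euclidean length eps*PI/2;
   - HSeg z    : the horizontal segment from z+(eps,0) to z+(1-eps,0);
   - VSeg z    : the vertical segment from z+(0,eps) to z+(0,1-eps);
                 segments have length 1 - 2 eps. *)

Inductive dir := DE | DN | DW | DS.

Definition ccw (d : dir) : dir :=
  match d with DE => DN | DN => DW | DW => DS | DS => DE end.

Definition pt := (Z * Z)%type.
Definition zadd (z w : pt) : pt := ((fst z + fst w)%Z, (snd z + snd w)%Z).
Definition zsub (z w : pt) : pt := ((fst z - fst w)%Z, (snd z - snd w)%Z).

Definition vertex := (pt * dir)%type.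

Inductive edge := Arc (z : pt) (d : dir) | HSeg (z : pt) | VSeg (z : pt).

Definition src (e : edge) : vertex :=
  match e with Arc z d => (z, d) | HSeg z => (z, DE) | VSeg z => (z, DN) end.
Definition tgt (e : edge) : vertex :=
  match e with
  | Arc z d => (z, ccw d)
  | HSeg z => (zadd z (1%Z, 0%Z), DW)
  | VSeg z => (zadd z (0%Z, 1%Z), DS)
  end.

Definition edge_length (eps : R) (e : edge) : R :=
  match e with Arc _ _ => eps * PI / 2 | _ => 1 - 2 * eps end.

Definition oedge := (edge * bool)%type.
Definition osrc (o : oedge) : vertex := if snd o then src (fst o) else tgt (fst o).
Definition otgt (o : oedge) : vertex := if snd o then tgt (fst o) else src (fst o).
Definition orev (o : oedge) : oedge := (fst o, negb (snd o)).

Fixpoint is_path (v : vertex) (p : list oedge) : Prop :=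
  match p with
  | [] => True
  | o :: p' => osrc o = v /\ is_path (otgt o) p'
  end.

Fixpoint path_end (v : vertex) (p : list oedge) : vertex :=
  match p with [] => v | o :: p' => path_end (otgt o) p' end.

Definition cycle := (vertex * list oedge)%type.

Definition is_cycle (g : cycle) : Prop :=
  is_path (fst g) (snd g) /\ path_end (fst g) (snd g) = fst g.

Definition geom_irreducible (p : list oedge) : Prop :=
  (~ exists l1 o l2, p = l1 ++ o :: orev o :: l2) /\
  (~ exists o m, p = o :: m ++ [orev o]).

(* elementary free homotopies of closed edge paths in the graph:
   removing a backtrack, or rotating the cycle (moving the base point) *)
Inductive cyc_step : cycle -> cycle -> Prop :=
  | cs_cancel v l1 o l2 :
      is_cycle (v, l1 ++ o :: orev o :: l2) ->
      cyc_step (v, l1 ++ o :: orev o :: l2) (v, l1 ++ l2)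
  | cs_rot v o l :
      is_cycle (v, o :: l) ->
      cyc_step (v, o :: l) (otgt o, l ++ [o]).

Definition freely_homotopic : cycle -> cycle -> Prop :=
  clos_refl_sym_trans cycle cyc_step.

Definition path_length (eps : R) (p : list oedge) : R :=
  fold_right (fun o acc => edge_length eps (fst o) + acc) 0 p.

Inductive gen := Ga | Gb | Gc.
Definition letter := (gen * bool)%type.  (* true: g, false: g^-1 *)
Definition word := list letter.
Definition linv (x : letter) : letter := (fst x, negb (snd x)).
Definition winv (w : word) : word := rev (map linv w).

Definition reduced (w : word) : Prop :=
  ~ exists l1 x l2, w = l1 ++ x :: linv x :: l2.
Definition cyclically_reduced (w : word) : Prop :=
  reduced w /\ ~ exists x m, w = x :: m ++ [linv x].

Inductive free_step : word -> word -> Prop :=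
  | fs_cancel l1 x l2 : free_step (l1 ++ x :: linv x :: l2) (l1 ++ l2).
Definition free_eq : word -> word -> Prop := clos_refl_sym_trans word free_step.

Definition rel_r : word := [(Ga, true); (Gb, true); (Ga, false); (Gb, false); (Gc, true)].

Definition in_N (w : word) : Prop :=
  exists cs : list (word * bool),
    free_eq w (concat (map (fun us : word * bool => fst us ++ (if snd us then rel_r else winv rel_r)
                                         ++ winv (fst us)) cs)).

Definition lab (w : word) : nat :=
  length (filter (fun x => match fst x with Gc => false | _ => true end) w).

(* P1 translated by z is the vertex (z, DS). *)
Definition gen_path (z : pt) (g : gen) : list oedge :=
  match g with
  | Ga => (* clockwise S -> W -> N, then vertical segment up to (z+(0,1), S) *)
      [(Arc z DW, false); (Arc z DN, false); (VSeg z, true)]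
  | Gb => (* ccw S -> E, horizontal segment to (z+(1,0), W), quarter arc W -> S *)
      [(Arc z DS, true); (HSeg z, true); (Arc (zadd z (1%Z, 0%Z)) DW, true)]
  | Gc =>
      [(Arc z DS, true); (Arc z DE, true); (Arc z DN, true); (Arc z DW, true)]
  end.

Definition gen_disp (g : gen) : pt :=
  match g with Ga => (0%Z, 1%Z) | Gb => (1%Z, 0%Z) | Gc => (0%Z, 0%Z) end.

Fixpoint lift (z : pt) (w : word) : list oedge :=
  match w with
  | [] => []
  | (g, true) :: w' => gen_path z g ++ lift (zadd z (gen_disp g)) w'
  | (g, false) :: w' =>
      rev (map orev (gen_path (zsub z (gen_disp g)) g))
        ++ lift (zsub z (gen_disp g)) w'
  end.

Definition gamma' (w : word) : cycle := (((0%Z, 0%Z), DS), lift (0%Z, 0%Z) w).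

(* Reading off a letter from each vertical segment (a), horizontal segment (b)
   and E-to-N quarter arc (c) of an edge path sends the lift of w back to w, since
   only the lift of c traverses an E-to-N arc; it sends free homotopies of cycles
   to free cancellations and cyclic rotations of words.  The number of letters
   a^{+-1}, b^{+-1} in the cyclically reduced core of a word is invariant under
   these moves.  For cyclically reduced w it equals l(w), and for the word of
   gamma(w) it is at most the number of segments of gamma(w), each of length
   1 - 2 eps. *)

From Stdlib Require Import Reals List Relations.
From Stdlib Require Import Lia Lra Classical.
Import ListNotations.
Open Scope nat_scope.

Lemma letter_eq_dec (x y : letter) : {x = y} + {x <> y}.
Proof. decide equality; decide equality. Qed.

Lemma linv_involutive x : linv (linv x) = x.
Proof. destruct x as [g b]; unfold linv; simpl; now rewrite Bool.negb_involutive. Qed.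

Lemma linv_inj x y : linv x = linv y -> x = y.
Proof. intro E. now rewrite <- (linv_involutive x), E, linv_involutive. Qed.

Lemma winv_app u v : winv (u ++ v) = winv v ++ winv u.
Proof. unfold winv. now rewrite map_app, rev_app_distr. Qed.

Lemma winv_cons x u : winv (x :: u) = winv u ++ [linv x].
Proof. reflexivity. Qed.

Lemma lab_app u v : lab (u ++ v) = lab u + lab v.
Proof. unfold lab. now rewrite filter_app, length_app. Qed.

Lemma lab_cons x u : lab (x :: u) = lab [x] + lab u.
Proof. exact (lab_app [x] u). Qed.

Lemma lab_linv x : lab [linv x] = lab [x].
Proof. now destruct x as [[] []]. Qed.

Lemma reduced_nil : reduced [].
Proof. intros [[|y l1] [x [l2 E]]]; discriminate. Qed.

Lemma reduced_cons x l :
  reduced l -> (forall l', l <> linv x :: l') -> reduced (x :: l).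
Proof.
  intros Hl Hhead [[|z l1] [y [l2 E]]]; injection E as -> E.
  - exact (Hhead l2 E).
  - apply Hl. eauto.
Qed.

Lemma reduced_cons_inv x l : reduced (x :: l) -> reduced l.
Proof. intros Hl [l1 [y [l2 E]]]. apply Hl. exists (x :: l1), y, l2. now rewrite E. Qed.

Lemma reduced_app_inv_l u v : reduced (u ++ v) -> reduced u.
Proof.
  intros Huv [l1 [y [l2 E]]]. apply Huv. exists l1, y, (l2 ++ v).
  now rewrite E, <- app_assoc.
Qed.

Lemma reduced_snoc l x :
  reduced l -> (forall l', l <> l' ++ [linv x]) -> reduced (l ++ [x]).
Proof.
  intros Hl Hlast [l1 [y [l2 E]]].
  destruct l2 as [|t l2 _] using rev_ind.
  - assert (E' : l ++ [x] = (l1 ++ [y]) ++ [linv y])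
      by (rewrite E, <- app_assoc; reflexivity).
    apply app_inj_tail in E' as [-> ->].
    apply (Hlast l1). now rewrite linv_involutive.
  - assert (E' : l ++ [x] = (l1 ++ y :: linv y :: l2) ++ [t])
      by (rewrite E, <- app_assoc; reflexivity).
    apply app_inj_tail in E' as [-> _].
    apply Hl. eauto.
Qed.

Definition push (x : letter) (s : word) : word :=
  match s with
  | y :: s' => if letter_eq_dec y (linv x) then s' else x :: s
  | [] => [x]
  end.

Definition reduce (l : word) : word := fold_right push [] l.

Lemma reduce_cons x l : reduce (x :: l) = push x (reduce l).
Proof. reflexivity. Qed.

Arguments reduce l : simpl never.

Lemma push_reduced x s : reduced s -> reduced (push x s).
Proof.
  intros Hs. destruct s as [|y s']; simpl.
  - apply reduced_cons; [apply reduced_nil | discriminate].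
  - destruct (letter_eq_dec y (linv x)) as [_|Hy].
    + exact (reduced_cons_inv _ _ Hs).
    + apply reduced_cons; [exact Hs|]. intros l' E. injection E as E _. contradiction.
Qed.

Lemma reduce_reduced l : reduced (reduce l).
Proof.
  induction l as [|x l IH]; [apply reduced_nil|].
  rewrite reduce_cons. now apply push_reduced.
Qed.

Lemma reduce_id l : reduced l -> reduce l = l.
Proof.
  induction l as [|x l IH]; intro Hl; [reflexivity|].
  rewrite reduce_cons, IH by exact (reduced_cons_inv _ _ Hl).
  destruct l as [|y l']; simpl; [reflexivity|].
  destruct (letter_eq_dec y (linv x)) as [->|]; [|reflexivity].
  exfalso. apply Hl. now exists [], x, l'.
Qed.

Lemma reduce_app u v : reduce (u ++ v) = fold_right push (reduce v) u.
Proof. apply fold_right_app. Qed.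

Lemma reduce_cancel_head x l : reduce (x :: linv x :: l) = reduce l.
Proof.
  rewrite !reduce_cons.
  pose proof (reduce_reduced l) as Hr. destruct (reduce l) as [|y r]; simpl.
  - destruct (letter_eq_dec (linv x) (linv x)); [reflexivity | contradiction].
  - destruct (letter_eq_dec y (linv (linv x))) as [E|E].
    + rewrite linv_involutive in E. subst y. destruct r as [|z r]; simpl; [reflexivity|].
      destruct (letter_eq_dec z (linv x)) as [->|]; [|reflexivity].
      exfalso. apply Hr. now exists [], x, r.
    + simpl. destruct (letter_eq_dec (linv x) (linv x)); [reflexivity | contradiction].
Qed.

Lemma reduce_cancel l1 x l2 : reduce (l1 ++ x :: linv x :: l2) = reduce (l1 ++ l2).
Proof. now rewrite !reduce_app, reduce_cancel_head. Qed.

Lemma reduce_infix p q s : reduce (p ++ q ++ s) = reduce (p ++ reduce q ++ s).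
Proof.
  revert p. induction q as [|x q IH]; intro p; [reflexivity|].
  rewrite reduce_cons.
  replace (p ++ (x :: q) ++ s) with ((p ++ [x]) ++ q ++ s)
    by (rewrite <- app_assoc; reflexivity).
  rewrite IH, <- app_assoc. simpl.
  destruct (reduce q) as [|y r]; simpl; [reflexivity|].
  destruct (letter_eq_dec y (linv x)) as [->|]; [|reflexivity].
  apply reduce_cancel.
Qed.

Lemma reduce_rotate x l : reduce (l ++ [x]) = reduce (linv x :: reduce (x :: l) ++ [x]).
Proof.
  pose proof (reduce_infix [linv x] (x :: l) [x]) as E. simpl in E. rewrite <- E.
  pose proof (reduce_cancel [] (linv x) (l ++ [x])) as E'.
  rewrite linv_involutive in E'. symmetry. exact E'.
Qed.

Lemma lab_push x s : lab (push x s) <= lab [x] + lab s.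
Proof.
  destruct s as [|y s']; simpl; [lia|].
  destruct (letter_eq_dec y (linv x)).
  - rewrite (lab_cons y s'). lia.
  - rewrite (lab_cons x (y :: s')). lia.
Qed.

Lemma lab_reduce_le l : lab (reduce l) <= lab l.
Proof.
  induction l as [|x l IH]; [reflexivity|].
  rewrite reduce_cons, (lab_cons x l).
  pose proof (lab_push x (reduce l)). lia.
Qed.

Definition ends_cancel (m : word) : Prop := exists x m', m = x :: m' ++ [linv x].

(* [m] is reduced automatically, being a subword of [reduce l]. *)
Definition cyclic_core (l m : word) : Prop :=
  exists u, reduce l = u ++ m ++ winv u /\ ~ ends_cancel m.

Lemma conj_ends_cancel y v m : ends_cancel ((y :: v) ++ m ++ winv (y :: v)).
Proof.
  exists y, (v ++ m ++ winv v). rewrite winv_cons. simpl. now rewrite !app_assoc.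
Qed.

Lemma conj_decomposition_exists n r : length r <= n ->
  exists u m, r = u ++ m ++ winv u /\ ~ ends_cancel m.
Proof.
  revert r. induction n as [|n IH]; intros r Hr.
  - destruct r; [|simpl in Hr; lia].
    exists [], []. split; [reflexivity|]. intros [x [m' E]]. discriminate.
  - destruct (classic (ends_cancel r)) as [[x [m' ->]]|Hr'].
    + assert (Hm' : length m' <= n)
        by (simpl in Hr; rewrite length_app in Hr; simpl in Hr; lia).
      destruct (IH m' Hm') as [u [m [-> Hm]]].
      exists (x :: u), m. split; [|exact Hm].
      rewrite winv_cons. simpl. now rewrite !app_assoc.
    + exists [], r. split; [|exact Hr']. simpl. now rewrite app_nil_r.
Qed.

Lemma cyclic_core_exists l : exists m, cyclic_core l m.
Proof.
  destruct (conj_decomposition_exists _ (reduce l) (le_n _)) as [u [m [E Hm]]].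
  now exists m, u.
Qed.

Lemma conj_decomposition_unique_prefix u v m m' :
  u ++ m ++ winv u = (u ++ v) ++ m' ++ winv (u ++ v) -> ~ ends_cancel m -> m = m'.
Proof.
  intros E Hm. rewrite winv_app, <- !app_assoc in E.
  apply app_inv_head in E. rewrite !app_assoc in E. apply app_inv_tail in E.
  destruct v as [|y v].
  - now rewrite app_nil_r in E.
  - exfalso. apply Hm. rewrite E, <- !app_assoc. apply conj_ends_cancel.
Qed.

Lemma conj_decomposition_unique u m u' m' :
  u ++ m ++ winv u = u' ++ m' ++ winv u' ->
  ~ ends_cancel m -> ~ ends_cancel m' -> m = m'.
Proof.
  intros E Hm Hm'. destruct (app_eq_app _ _ _ _ E) as [v [[-> _]|[-> _]]].
  - symmetry. apply (conj_decomposition_unique_prefix u' v); [symmetry|]; assumption.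
  - exact (conj_decomposition_unique_prefix u v m m' E Hm).
Qed.

Lemma cyclic_core_unique l m m' : cyclic_core l m -> cyclic_core l m' -> m = m'.
Proof.
  intros [u [E Hm]] [u' [E' Hm']]. rewrite E in E'.
  exact (conj_decomposition_unique _ _ _ _ E' Hm Hm').
Qed.

Lemma cyclic_core_of_cyclically_reduced w : cyclically_reduced w -> cyclic_core w w.
Proof.
  intros [Hw Hcyc]. exists []. simpl. now rewrite reduce_id, app_nil_r.
Qed.

Lemma lab_cyclic_core_le l m : cyclic_core l m -> lab m <= lab l.
Proof.
  intros [u [E _]]. pose proof (lab_reduce_le l) as H.
  rewrite E, !lab_app in H. lia.
Qed.

Lemma cyclic_core_cancel l1 x l2 m :
  cyclic_core (l1 ++ x :: linv x :: l2) m <-> cyclic_core (l1 ++ l2) m.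
Proof. unfold cyclic_core. now rewrite reduce_cancel. Qed.

Lemma not_ends_cancel_snoc x m : reduced (x :: m) -> ~ ends_cancel (m ++ [x]).
Proof.
  intros Hr [y [m' E]]. destruct m as [|z m0]; simpl in E; injection E as -> E.
  - destruct m'; discriminate.
  - apply app_inj_tail in E as [-> ->]. apply Hr. exists [], (linv y), m'.
    now rewrite linv_involutive.
Qed.

Lemma not_ends_cancel_cons x m : reduced (m ++ [x]) -> ~ ends_cancel (x :: m).
Proof.
  intros Hr [y [m' E]]. injection E as -> ->. apply Hr. exists m', (linv y), [].
  rewrite linv_involutive, <- app_assoc. reflexivity.
Qed.

Lemma reduced_conj x r : reduced r -> r <> [] ->
  (forall r', r <> x :: r') -> (forall r', r <> r' ++ [linv x]) ->
  reduced (linv x :: r ++ [x]).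
Proof.
  intros Hr Hne Hhead Hlast. apply reduced_cons; [now apply reduced_snoc|].
  rewrite linv_involutive. destruct r as [|y r]; [contradiction|].
  intros l' E. injection E as -> _. exact (Hhead r eq_refl).
Qed.

Lemma cyclic_core_conj_reduced x r u m :
  r = u ++ m ++ winv u -> ~ ends_cancel m -> reduced r -> r <> [] ->
  (forall r', r <> x :: r') -> (forall r', r <> r' ++ [linv x]) ->
  cyclic_core (linv x :: r ++ [x]) m.
Proof.
  intros Er Hm Hr Hne Hhead Hlast. exists (linv x :: u). split; [|exact Hm].
  rewrite reduce_id by now apply reduced_conj.
  rewrite winv_cons, linv_involutive, Er. simpl. now rewrite <- !app_assoc.
Qed.

Lemma cyclic_core_conj_outer x y u m :
  reduced ((y :: u) ++ m ++ winv (y :: u)) -> ~ ends_cancel m ->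
  cyclic_core (linv x :: ((y :: u) ++ m ++ winv (y :: u)) ++ [x]) m.
Proof.
  intros Hr Hm. rewrite winv_cons in *.
  destruct (letter_eq_dec y x) as [->|Hyx].
  - exists u. split; [|exact Hm].
    replace (linv x :: ((x :: u) ++ m ++ winv u ++ [linv x]) ++ [x])
      with ([] ++ linv x :: linv (linv x) :: (u ++ m ++ winv u) ++ [linv x; linv (linv x)])
      by (rewrite linv_involutive; simpl; now rewrite <- !app_assoc).
    rewrite reduce_cancel, app_nil_l, reduce_cancel, app_nil_r.
    apply reduce_id. simpl in Hr. apply reduced_cons_inv in Hr.
    rewrite !app_assoc in Hr. apply reduced_app_inv_l in Hr.
    now rewrite <- !app_assoc in Hr.
  - apply (cyclic_core_conj_reduced x _ (y :: u) m);
      [now rewrite winv_cons | exact Hm | exact Hr | discriminate | |].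
    + intros r' E. injection E as E _. contradiction.
    + intros r' E. rewrite !app_assoc in E.
      apply (app_inj_tail (y :: (u ++ m) ++ winv u)) in E as [_ E].
      apply Hyx, linv_inj. now symmetry.
Qed.

Lemma cyclic_core_conj_inner x m : reduced m -> ~ ends_cancel m ->
  exists m', cyclic_core (linv x :: m ++ [x]) m' /\ lab m' = lab m.
Proof.
  intros Hr Hm. destruct m as [|z m0].
  - exists []. split; [|reflexivity]. exists []. split.
    + pose proof (reduce_cancel [] (linv x) []) as E.
      rewrite linv_involutive in E. exact E.
    + intros [y [m' E]]. discriminate.
  - destruct (letter_eq_dec z x) as [->|Hzx].
    + exists (m0 ++ [x]). split.
      * exists []. split; [|exact (not_ends_cancel_snoc _ _ Hr)].
        pose proof (reduce_cancel [] (linv x) (m0 ++ [x])) as E.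
        rewrite linv_involutive in E. simpl in E |- *. rewrite E, app_nil_r.
        apply reduce_id, reduced_snoc; [exact (reduced_cons_inv _ _ Hr)|].
        intros l' ->. apply Hm. now exists x, l'.
      * rewrite lab_app, (lab_cons x m0). lia.
    + destruct (exists_last (l := z :: m0)) as [m1 [t Em]]; [discriminate|].
      destruct (letter_eq_dec t (linv x)) as [->|Htx].
      * exists (linv x :: m1). rewrite Em in Hr |- *. split.
        -- exists []. split; [|exact (not_ends_cancel_cons _ _ Hr)].
           pose proof (reduce_cancel (linv x :: m1) (linv x) []) as E.
           rewrite linv_involutive, app_nil_r in E.
           rewrite <- app_assoc. etransitivity; [exact E|]. simpl. rewrite app_nil_r.
           apply reduce_id, reduced_cons; [exact (reduced_app_inv_l _ _ Hr)|].
           rewrite linv_involutive. intros l' ->. injection Em as Ezx _.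
           contradiction.
        -- rewrite lab_app, (lab_cons (linv x) m1), lab_linv. lia.
      * exists (z :: m0). split; [|reflexivity].
        apply (cyclic_core_conj_reduced x _ [] (z :: m0));
          [simpl; now rewrite app_nil_r | exact Hm | exact Hr | discriminate | |].
        -- intros r' E. injection E as E _. contradiction.
        -- intros r' E. rewrite Em in E. apply app_inj_tail in E as [_ E].
           contradiction.
Qed.

Lemma cyclic_core_rotate x l m : cyclic_core (x :: l) m ->
  exists m', cyclic_core (l ++ [x]) m' /\ lab m' = lab m.
Proof.
  intros [u [E Hm]]. unfold cyclic_core. rewrite reduce_rotate.
  pose proof (reduce_reduced (x :: l)) as Hr. rewrite E in Hr |- *.
  destruct u as [|y u].
  - simpl in Hr |- *. rewrite app_nil_r in Hr |- *.
    exact (cyclic_core_conj_inner x m Hr Hm).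
  - exists m. split; [|reflexivity]. exact (cyclic_core_conj_outer x y u m Hr Hm).
Qed.

Inductive cyclic_word_step : word -> word -> Prop :=
  | cws_cancel l1 x l2 : cyclic_word_step (l1 ++ x :: linv x :: l2) (l1 ++ l2)
  | cws_rotate x l : cyclic_word_step (x :: l) (l ++ [x]).

Definition cyclic_word_equiv : word -> word -> Prop :=
  clos_refl_sym_trans word cyclic_word_step.

Lemma lab_cyclic_core_step s t m m' : cyclic_word_step s t ->
  cyclic_core s m -> cyclic_core t m' -> lab m = lab m'.
Proof.
  intros [l1 x l2|x l] Hs Ht.
  - apply cyclic_core_cancel in Hs. now rewrite (cyclic_core_unique _ _ _ Hs Ht).
  - destruct (cyclic_core_rotate x l m Hs) as [m'' [Ht' <-]].
    now rewrite (cyclic_core_unique _ _ _ Ht Ht').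
Qed.

Lemma lab_cyclic_core_equiv s t m m' : cyclic_word_equiv s t ->
  cyclic_core s m -> cyclic_core t m' -> lab m = lab m'.
Proof.
  intros Hst. revert m m'. induction Hst as [s t Hst|s|s t _ IH|s u t _ IH1 _ IH2];
    intros m m' Hs Ht.
  - exact (lab_cyclic_core_step _ _ _ _ Hst Hs Ht).
  - now rewrite (cyclic_core_unique _ _ _ Hs Ht).
  - symmetry. exact (IH _ _ Ht Hs).
  - destruct (cyclic_core_exists u) as [mu Hu].
    now rewrite (IH1 _ _ Hs Hu), (IH2 _ _ Hu Ht).
Qed.

Definition edge_word (o : oedge) : word :=
  match o with
  | (Arc _ DE, b) => [(Gc, b)]
  | (HSeg _, b) => [(Gb, b)]
  | (VSeg _, b) => [(Ga, b)]
  | _ => []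
  end.

Fixpoint path_word (p : list oedge) : word :=
  match p with [] => [] | o :: p' => edge_word o ++ path_word p' end.

Lemma path_word_app p q : path_word (p ++ q) = path_word p ++ path_word q.
Proof. induction p as [|o p IH]; simpl; [reflexivity|]. now rewrite IH, app_assoc. Qed.

Lemma path_word_lift z w : path_word (lift z w) = w.
Proof.
  revert z. induction w as [|[g []] w IH]; intro z; [reflexivity|..];
    destruct g; simpl; now rewrite IH.
Qed.

Lemma edge_word_orev o :
  (edge_word o = [] /\ edge_word (orev o) = []) \/
  exists x, edge_word o = [x] /\ edge_word (orev o) = [linv x].
Proof.
  destruct o as [[z [] | z | z] []]; simpl;
    first [left; split; reflexivity | right; eexists; split; reflexivity].
Qed.

Lemma path_word_cyc_step g g' : cyc_step g g' ->
  cyclic_word_equiv (path_word (snd g)) (path_word (snd g')).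
Proof.
  intros [v l1 o l2 _|v o l _]; simpl snd.
  - rewrite !path_word_app.
    change (path_word (o :: orev o :: l2))
      with (edge_word o ++ edge_word (orev o) ++ path_word l2).
    destruct (edge_word_orev o) as [[-> ->]|[x [-> ->]]]; simpl.
    + apply rst_refl.
    + apply rst_step, cws_cancel.
  - rewrite path_word_app. simpl path_word. rewrite app_nil_r.
    destruct (edge_word_orev o) as [[-> _]|[x [-> _]]]; simpl.
    + rewrite app_nil_r. apply rst_refl.
    + apply rst_step, cws_rotate.
Qed.

Lemma path_word_freely_homotopic g g' : freely_homotopic g g' ->
  cyclic_word_equiv (path_word (snd g)) (path_word (snd g')).
Proof.
  induction 1.
  - now apply path_word_cyc_step.
  - apply rst_refl.
  - now apply rst_sym.
  - eapply rst_trans; eassumption.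
Qed.

Open Scope R_scope.

Lemma lab_path_word_le_length eps p : 0 < eps ->
  (1 - 2 * eps) * INR (lab (path_word p)) <= path_length eps p.
Proof.
  intro Heps. pose proof PI_RGT_0.
  assert (0 <= eps * PI / 2) by (apply Rmult_le_pos; [apply Rmult_le_pos|]; lra).
  induction p as [|o p IH]; simpl; [lra|].
  rewrite lab_app, plus_INR.
  destruct o as [[z [] | z | z] []]; simpl; lra.
Qed.

Theorem lemma2p2 (eps : R) (heps : 0 < eps < 1/10) (w : word) (gam : cycle) :
  in_N w -> cyclically_reduced w ->
  is_cycle gam -> geom_irreducible (snd gam) ->
  freely_homotopic (gamma' w) gam ->
  INR (lab w) <= / (1 - 2 * eps) * path_length eps (snd gam).
Proof.
  intros _ Hw _ _ Hhom.
  apply path_word_freely_homotopic in Hhom. simpl in Hhom. rewrite path_word_lift in Hhom.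
  destruct (cyclic_core_exists (path_word (snd gam))) as [m Hm].
  assert (Hlab : lab w = lab m)
    by exact (lab_cyclic_core_equiv _ _ _ _ Hhom (cyclic_core_of_cyclically_reduced w Hw) Hm).
  assert (Hle : (lab w <= lab (path_word (snd gam)))%nat)
    by (rewrite Hlab; exact (lab_cyclic_core_le _ _ Hm)).
  pose proof (lab_path_word_le_length eps (snd gam) (proj1 heps)) as Hlen.
  apply le_INR in Hle.
  apply Rmult_le_reg_l with (1 - 2 * eps); [lra|].
  rewrite <- Rmult_assoc, Rinv_r, Rmult_1_l by lra.
  apply Rle_trans with ((1 - 2 * eps) * INR (lab (path_word (snd gam)))); [|exact Hlen].
  apply Rmult_le_compat_l; [lra | exact Hle].
Qed.
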